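(* Let $2\le i\le n/3$, let $\alpha,\beta$ be conjugacy classes of $S_n$ with $a_j=b_j$ for $j<i$ and $a_i\ne b_i$, and for $0\le k\le i-1$ put $r_k=1-\frac{i(n-i+k+1)}{\binom n2}$. If $t\ge \frac{n^2(\log(i-1)+1)}{i}$, then $\Big|(a_i-b_i)\binom ni\sum_{k=1}^{i-1}(-1)^k\binom{i-1}{k}\frac{n-2i+k+1}{n-i+k+1}r_k^t\Big|\le\frac12\,|a_i-b_i|\binom ni\frac{n-2i+1}{n-i+1}r_0^t.$ That is, the combined contribution of the partitions $[n-i,i-k,1^k]$, $1\le k\le i-1$, to the Fourier expansion of $P^{*t}(\alpha)-P^{*t}(\beta)$ for the random transposition walk is at most half, in absolute value, of the contribution of $[n-i,i]$.
   Context: $\log$ is the natural logarithm. $a_j$ (resp. $b_j$) is the number of $j$-cycles of the class $\alpha$ (resp. $\beta$). The random transposition walk on $S_n$ starts at the identity and at each step multiplies by a uniformly random transposition; $P^{*t}(\alpha)$ is the probability of any fixed element of class $\alpha$ after $t$ steps, and $P^{*t}(\alpha)-P^{*t}(\beta)=\frac1{n!}\sum_\lambda(\chi_\lambda(\alpha)-\chi_\lambda(\beta))d_\lambda\big(\chi_\lambda(\tau)/d_\lambda\big)^t$. *)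

From Stdlib Require Import Reals Lra Lia.
Open Scope R_scope.

Fixpoint wsum (a : nat -> nat) (m : nat) : nat :=
  match m with
  | O => O
  | S m' => (wsum a m' + S m' * a (S m'))%nat
  end.

(* A conjugacy class of S_n, encoded by its cycle type: a j = number of
   j-cycles, with sum_j j a_j = n and a_j = 0 outside 1..n. *)
Definition is_cycle_type (n : nat) (a : nat -> nat) : Prop :=
  wsum a n = n /\ (forall j : nat, (j = 0 \/ n < j)%nat -> a j = 0%nat).

Definition rk (n i k : nat) : R :=
  1 - INR i * (INR n - INR i + INR k + 1) / C n 2.

(* Write D = binom(n,2) and m = i - 1.  The eigenvalue ratios are
   affine in k: r_k = r_0 (1 - k c) with decay rate c = i / (D r_0), and since
   D r_0 <= n^2/2 we get c >= 2i/n^2.  Hence r_k^t <= r_0^t q^k with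
   q = exp(-c t), and the hypothesis on t gives c t >= 2 (log m + 1), i.e.
   m^2 q <= e^{-2} <= 1/4.  Each summand is then bounded by
   binom(m,k) r_0^t q^k <= r_0^t (m q)^k <= r_0^t m q, so the sum of the m
   summands is at most r_0^t m^2 q <= r_0^t / 4.  Finally the weight of the
   leading term, (n-2i+1)/(n-i+1), is at least 1/2 because n >= 3i.

   The bound holds for
   arbitrary values a_i, b_i: the cycle-type hypotheses only fix the context. *)

From Stdlib Require Import Reals Lra Lia.
Open Scope R_scope.

Lemma fact_le_pow_mul_fact (m k : nat) : (k <= m)%nat ->
  (Factorial.fact m <= m ^ k * Factorial.fact (m - k))%nat.
Proof.
  induction k as [|k IH]; intros Hk.
  - rewrite Nat.sub_0_r; simpl; lia.
  - assert (Hstep : Factorial.fact (m - k) = ((m - k) * Factorial.fact (m - S k))%nat).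
    { replace (m - k)%nat with (S (m - S k)) by lia. reflexivity. }
    assert (Hle : ((m - k) * Factorial.fact (m - S k) <= m * Factorial.fact (m - S k))%nat)
      by (apply Nat.mul_le_mono_r; lia).
    specialize (IH ltac:(lia)); rewrite Hstep in IH; simpl; nia.
Qed.

Lemma C_le_pow (m k : nat) : (k <= m)%nat -> C m k <= INR m ^ k.
Proof.
  intros Hk; unfold C.
  assert (Hk1 : 1 <= INR (Factorial.fact k)).
  { apply (le_INR 1); pose proof (Factorial.lt_O_fact k); lia. }
  assert (Hmk : 0 < INR (Factorial.fact (m - k))) by apply lt_0_INR, Factorial.lt_O_fact.
  assert (Hpow : 0 <= INR m ^ k) by apply pow_le, pos_INR.
  assert (Hnum := le_INR _ _ (fact_le_pow_mul_fact m k Hk)).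
  rewrite mult_INR, pow_INR in Hnum.
  apply Rle_trans with (INR m ^ k * INR (Factorial.fact (m - k))
                        / (INR (Factorial.fact k) * INR (Factorial.fact (m - k)))).
  - apply Rmult_le_compat_r; [|exact Hnum].
    left; apply Rinv_0_lt_compat, Rmult_lt_0_compat; lra.
  - replace (INR m ^ k * INR (Factorial.fact (m - k))
             / (INR (Factorial.fact k) * INR (Factorial.fact (m - k))))
      with (INR m ^ k / INR (Factorial.fact k)) by (field; lra).
    apply Rmult_le_reg_r with (INR (Factorial.fact k)); [lra|].
    unfold Rdiv; rewrite Rmult_assoc, Rinv_l by lra; nra.
Qed.

Lemma C_n_2 (n : nat) : (2 <= n)%nat -> C n 2 = INR n * (INR n - 1) / 2.
Proof.
  intros Hn; destruct n as [|[|p]]; try lia.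
  unfold C; replace (S (S p) - 2)%nat with p by lia.
  change (Factorial.fact (S (S p))) with (S (S p) * (S p * Factorial.fact p))%nat.
  assert (Hp := INR_fact_neq_0 p).
  rewrite !mult_INR, !S_INR; simpl; field; exact Hp.
Qed.

Lemma C_nonneg (m k : nat) : 0 <= C m k.
Proof.
  unfold C; apply Rmult_le_pos; [apply pos_INR|].
  left; apply Rinv_0_lt_compat, Rmult_lt_0_compat; apply lt_0_INR, Factorial.lt_O_fact.
Qed.

Lemma exp_le_compat (x y : R) : x <= y -> exp x <= exp y.
Proof. intros [Hlt|Heq]; [left; now apply exp_increasing | subst; lra]. Qed.

Lemma exp_pow (x : R) (t : nat) : exp x ^ t = exp (INR t * x).
Proof.
  induction t as [|t IH].
  - simpl; rewrite Rmult_0_l, exp_0; reflexivity.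
  - rewrite <- tech_pow_Rmult, IH, <- exp_plus, S_INR; f_equal; ring.
Qed.

(* From 1 - x <= exp(-x): powers of a shrunk ratio r (1 - x) decay exponentially. *)
Lemma pow_le_exp_decay (r x : R) (t : nat) :
  0 <= r -> 0 <= r * (1 - x) -> (r * (1 - x)) ^ t <= r ^ t * exp (- x) ^ t.
Proof.
  intros Hr Hrx; rewrite <- Rpow_mult_distr; apply pow_incr; split; [exact Hrx|].
  apply Rmult_le_compat_l; [exact Hr|].
  pose proof (exp_ineq1_le (- x)); lra.
Qed.

Lemma square_times_decay_small (m x : R) :
  0 < m -> 2 * (ln m + 1) <= x -> m ^ 2 * exp (- x) <= / 4.
Proof.
  intros Hm Hx.
  assert (Hsq : m ^ 2 = exp (2 * ln m)).
  { rewrite <- (exp_ln m) at 1 by exact Hm; rewrite exp_pow; reflexivity. }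
  assert (He : 2 <= exp 1) by (pose proof (exp_ineq1_le 1); lra).
  rewrite Hsq, <- exp_plus.
  apply Rle_trans with (exp (Ropp 1 + Ropp 1)); [apply exp_le_compat; lra|].
  rewrite exp_plus, exp_Ropp.
  replace (/ 4) with (/ 2 * / 2) by field.
  assert (/ exp 1 <= / 2) by (apply Rinv_le_contravar; lra).
  assert (0 < / exp 1) by (apply Rinv_0_lt_compat, exp_pos).
  nra.
Qed.

(* A sum over 1 <= k <= m of terms bounded by binom(m,k) A q^k is at most A/4
   as soon as m^2 q <= 1/4: each term is at most A (m q), and there are m terms. *)
Lemma binomial_tail_bound (m : nat) (A q : R) (f : nat -> R) :
  (1 <= m)%nat -> 0 <= A -> 0 <= q -> INR m ^ 2 * q <= / 4 ->
  (forall k, (1 <= k <= m)%nat -> Rabs (f k) <= C m k * A * q ^ k) ->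
  Rabs (sum_f 1 m f) <= / 4 * A.
Proof.
  intros Hm HA Hq Hmq Hf.
  assert (HM : 1 <= INR m) by (apply (le_INR 1); exact Hm).
  set (y := INR m * q).
  assert (Hy0 : 0 <= y) by (unfold y; nra).
  assert (Hy1 : y <= 1) by (unfold y; nra).
  assert (Hterm : forall k, (1 <= k <= m)%nat -> Rabs (f k) <= A * y).
  { intros k Hk.
    assert (HC := C_le_pow m k ltac:(lia)).
    assert (Hqk : 0 <= q ^ k) by (apply pow_le; exact Hq).
    assert (Hyk : y ^ k <= y).
    { replace k with (S (k - 1)) by lia; simpl.
      assert (y ^ (k - 1) <= 1) by (rewrite <- (pow1 (k - 1)); apply pow_incr; lra).
      nra. }
    apply Rle_trans with (INR m ^ k * A * q ^ k).
    - apply Rle_trans with (1 := Hf k Hk).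
      apply Rmult_le_compat_r; [exact Hqk|]; apply Rmult_le_compat_r; assumption.
    - unfold y in Hyk; rewrite Rpow_mult_distr in Hyk.
      replace (INR m ^ k * A * q ^ k) with (A * (INR m ^ k * q ^ k)) by ring.
      apply Rmult_le_compat_l; assumption. }
  unfold sum_f; eapply Rle_trans; [apply sum_f_R0_triangle|].
  eapply Rle_trans.
  - apply (sum_Rle _ (fun _ => A * y)); intros k Hk; apply Hterm; lia.
  - rewrite sum_cte; replace (S (m - 1)) with m by lia.
    unfold y; nra.
Qed.

Lemma ratio_unit_interval (x y : R) : 0 <= x <= y -> 0 < y -> 0 <= x / y <= 1.
Proof.
  intros Hxy Hy; split.
  - apply Rmult_le_pos; [lra | left; now apply Rinv_0_lt_compat].
  - apply Rmult_le_reg_r with y; [exact Hy|].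
    unfold Rdiv; rewrite Rmult_assoc, Rinv_l by lra; lra.
Qed.

(* The rate c = i / (binom(n,2) r_0) with r_k = r_0 (1 - k c). *)
Definition decay (n i : nat) : R := INR i / (C n 2 * rk n i 0).

Section Eigenvalues.

Variables n i : nat.
Hypothesis Hi : (2 <= i)%nat.
Hypothesis Hn : (3 * i <= n)%nat.

Let HI : 2 <= INR i.
Proof. apply (le_INR 2) in Hi; simpl in Hi; lra. Qed.

Let HN : 3 * INR i <= INR n.
Proof. apply le_INR in Hn; rewrite mult_INR in Hn; simpl in Hn; lra. Qed.

Let HC2 : C n 2 = INR n * (INR n - 1) / 2.
Proof. apply C_n_2; lia. Qed.

Let HC2pos : 0 < C n 2.
Proof. rewrite HC2; nra. Qed.

Lemma rk_shift (k : nat) : rk n i k = rk n i 0 - INR i * INR k / C n 2.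
Proof. unfold rk; rewrite INR_0; field; lra. Qed.

Lemma spectral_gap_bounds : 0 < C n 2 * rk n i 0 <= INR n ^ 2 / 2.
Proof.
  replace (C n 2 * rk n i 0) with (C n 2 - INR i * (INR n - INR i + 1))
    by (unfold rk; rewrite INR_0; field; lra).
  rewrite HC2; split; nra.
Qed.

Lemma rk0_pos : 0 < rk n i 0.
Proof.
  destruct spectral_gap_bounds as [Hgap _].
  apply Rmult_lt_reg_l with (C n 2); [exact HC2pos | lra].
Qed.

Lemma rk_factor (k : nat) : rk n i k = rk n i 0 * (1 - INR k * decay n i).
Proof.
  assert (Hr := rk0_pos).
  rewrite rk_shift; unfold decay; field; lra.
Qed.

Lemma decay_lower : 2 * INR i / INR n ^ 2 <= decay n i.
Proof.
  destruct spectral_gap_bounds as [Hgap Hgap2]; unfold decay.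
  replace (2 * INR i / INR n ^ 2) with (INR i / (INR n ^ 2 / 2)) by (field; nra).
  apply Rmult_le_compat_l; [lra|]; apply Rinv_le_contravar; lra.
Qed.

(* All ratios r_k with k <= i-1 are nonnegative, since i(n-i+k+1) <= i n <= binom(n,2). *)
Lemma rk_nonneg (k : nat) : (k <= i - 1)%nat -> 0 <= rk n i k.
Proof.
  intros Hk; apply le_INR in Hk; rewrite minus_INR in Hk by lia; simpl in Hk.
  assert (Hk0 := pos_INR k).
  assert (Hle : INR i * (INR n - INR i + INR k + 1) <= C n 2) by (rewrite HC2; nra).
  assert (Hpos : 0 <= INR i * (INR n - INR i + INR k + 1)) by nra.
  assert (Hratio := ratio_unit_interval _ _ (conj Hpos Hle) HC2pos).
  unfold rk; lra.
Qed.

Lemma rk_pow_le (k t : nat) : (k <= i - 1)%nat ->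
  rk n i k ^ t <= rk n i 0 ^ t * exp (- (decay n i * INR t)) ^ k.
Proof.
  intros Hk.
  assert (Hr0 := rk0_pos); assert (Hrk := rk_nonneg k Hk); rewrite rk_factor in Hrk.
  rewrite rk_factor.
  replace (exp (- (decay n i * INR t)) ^ k) with (exp (- (INR k * decay n i)) ^ t)
    by (rewrite !exp_pow; f_equal; ring).
  apply pow_le_exp_decay; lra.
Qed.

Lemma weight_bounds (k : nat) :
  0 <= (INR n - 2 * INR i + INR k + 1) / (INR n - INR i + INR k + 1) <= 1.
Proof. assert (Hk := pos_INR k); apply ratio_unit_interval; lra. Qed.

Lemma weight0_ge_half : / 2 <= (INR n - 2 * INR i + 1) / (INR n - INR i + 1).
Proof.
  apply Rmult_le_reg_r with (INR n - INR i + 1); [lra|].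
  unfold Rdiv; rewrite Rmult_assoc, Rinv_l by lra; lra.
Qed.

Lemma summand_bound (t k : nat) : (k <= i - 1)%nat ->
  Rabs ((-1) ^ k * C (i - 1) k *
        ((INR n - 2 * INR i + INR k + 1) / (INR n - INR i + INR k + 1)) * rk n i k ^ t)
  <= C (i - 1) k * rk n i 0 ^ t * exp (- (decay n i * INR t)) ^ k.
Proof.
  intros Hk.
  assert (Hw := weight_bounds k).
  assert (Hpow := rk_pow_le k t Hk).
  assert (Hpow0 : 0 <= rk n i k ^ t) by (apply pow_le, rk_nonneg, Hk).
  assert (HC := C_nonneg (i - 1) k).
  rewrite !Rabs_mult, pow_1_abs, (Rabs_pos_eq (C _ _) HC), (Rabs_pos_eq _ (proj1 Hw)),
    (Rabs_pos_eq _ Hpow0), Rmult_1_l, !Rmult_assoc.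
  apply Rmult_le_compat_l; [exact HC|].
  apply Rle_trans with (rk n i k ^ t); [|exact Hpow].
  rewrite <- (Rmult_1_l (rk n i k ^ t)) at 2.
  apply Rmult_le_compat_r; lra.
Qed.

Lemma mixing_time_decay (t : nat) :
  INR t >= INR n ^ 2 * (ln (INR i - 1) + 1) / INR i ->
  2 * (ln (INR i - 1) + 1) <= decay n i * INR t.
Proof.
  intros Ht.
  assert (Hrate := decay_lower).
  assert (Ht0 := pos_INR t).
  apply Rle_trans with (2 * INR i / INR n ^ 2 * INR t).
  - replace (2 * (ln (INR i - 1) + 1))
      with (2 * INR i / INR n ^ 2 * (INR n ^ 2 * (ln (INR i - 1) + 1) / INR i))
      by (field; split; nra).
    apply Rmult_le_compat_l; [|lra].
    apply Rmult_le_pos; [lra | left; apply Rinv_0_lt_compat; nra].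
  - apply Rmult_le_compat_r; assumption.
Qed.

End Eigenvalues.

Theorem lemma5p7 (n i : nat) (a b : nat -> nat) (t : nat) :
  (2 <= i)%nat -> (3 * i <= n)%nat ->
  is_cycle_type n a -> is_cycle_type n b ->
  (forall j : nat, (j < i)%nat -> a j = b j) ->
  a i <> b i ->
  INR t >= INR n ^ 2 * (ln (INR i - 1) + 1) / INR i ->
  Rabs ((INR (a i) - INR (b i)) * C n i *
        sum_f 1 (i - 1)
          (fun k => (-1) ^ k * C (i - 1) k *
                    ((INR n - 2 * INR i + INR k + 1) / (INR n - INR i + INR k + 1)) *
                    rk n i k ^ t))
  <= / 2 * Rabs (INR (a i) - INR (b i)) * C n i *
     ((INR n - 2 * INR i + 1) / (INR n - INR i + 1)) * rk n i 0 ^ t.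
Proof.
  intros Hi Hn _ _ _ _ Ht.
  set (q := exp (- (decay n i * INR t))).
  assert (Hm : INR (i - 1) = INR i - 1) by (rewrite minus_INR by lia; reflexivity).
  assert (Hr0t : 0 <= rk n i 0 ^ t) by (apply pow_le; left; apply rk0_pos; assumption).
  assert (Hsmall : INR (i - 1) ^ 2 * q <= / 4).
  { apply square_times_decay_small.
    - apply lt_0_INR; lia.
    - rewrite Hm; apply mixing_time_decay; assumption. }
  assert (Htail := binomial_tail_bound (i - 1) (rk n i 0 ^ t) q _
                     ltac:(lia) Hr0t (Rlt_le _ _ (exp_pos _)) Hsmall
                     (fun k Hk => summand_bound n i Hi Hn t k (proj2 Hk))).
  assert (Hhalf := weight0_ge_half n i Hi Hn).
  set (S := sum_f 1 (i - 1) _) in *.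
  set (A := Rabs (INR (a i) - INR (b i)) * C n i).
  assert (HA : 0 <= A) by (apply Rmult_le_pos; [apply Rabs_pos | apply C_nonneg]).
  replace (Rabs ((INR (a i) - INR (b i)) * C n i * S)) with (A * Rabs S)
    by (unfold A; rewrite !Rabs_mult, (Rabs_pos_eq (C n i)) by apply C_nonneg; reflexivity).
  replace (/ 2 * Rabs (INR (a i) - INR (b i)) * C n i *
           ((INR n - 2 * INR i + 1) / (INR n - INR i + 1)) * rk n i 0 ^ t)
    with (A * (/ 2 * ((INR n - 2 * INR i + 1) / (INR n - INR i + 1)) * rk n i 0 ^ t))
    by (unfold A; ring).
  apply Rmult_le_compat_l; [exact HA | nra].
Qed.
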